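(* Let $n,m,n_f,\ell\in\mathbb{N}$, let $w>1$ be a number representable with $n$ bits of which the first $m$ are its integer part, let $F\in[0,1]$, and let $f\in[0,1]$ be given with $n_f$ bits after the binary point such that $|F-f|\leq 2^{-n_f}$. Then the value $\hat{z}$ returned by Algorithm FractionalPower$(w,f,n,m,n_f,\ell)$ (described in the context) satisfies $$|\hat{z}-w^F|\leq\left(\frac12\right)^{\ell-1}+\frac{w\ln w}{2^{n_f}}.$$
   Context: Fixed precision representation: a number $w\ge 0$ ''given by $n$ bits of which the first $m$ correspond to its integer part'' means $w=\sum_{j=m-n}^{m-1} w^{(j)}2^j$ with $w^{(j)}\in\{0,1\}$. For $x\geq 0$, ''truncating $x$ to $b$ bits after the binary point'' means replacing $x$ by $\lfloor 2^b x\rfloor/2^b$. All arithmetic inside a step is performed exactly; only the stated truncations introduce error. Algorithm SQRT$(w,n,m,b)$ (input $w\geq 1$): if $w=1$, return $1$. Otherwise: let $p\in\mathbb{N}$ with $2^{p}>w\geq 2^{p-1}$ and set $\hat{x}_0=2^{-p}$; let $s=\lceil\log_2 b\rceil$; for $i=1,\dots,s$ compute exactly $x_i=-w\hat{x}_{i-1}^2+2\hat{x}_{i-1}$ and let $\hat{x}_i$ be $x_i$ truncated to $b$ bits. Then let $q\in\mathbb{N}$ with $2^{1-q}>\hat{x}_s\geq 2^{-q}$ and set $\hat{y}_0=2^{\lfloor (q-1)/2\rfloor}$; for $j=1,\dots,s$ compute exactly $y_j=\frac12(3\hat{y}_{j-1}-\hat{x}_s\hat{y}_{j-1}^3)$ and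 let $\hat{y}_j$ be $y_j$ truncated to $b$ bits. Return $\hat{y}_s$. Algorithm PowerOf2Roots$(w,k,n,m,b)$: set $\hat{z}_1=$ SQRT$(w,n,m,b)$; for $i=2,\dots,k$ set $\hat{z}_i=$ SQRT$(\hat{z}_{i-1},m+b,m,b)$. Return $\hat{z}_1,\dots,\hat{z}_k$. Algorithm FractionalPower$(w,f,n,m,n_f,\ell)$ (input $w\geq1$, $f=\sum_{i=1}^{n_f}f_i2^{-i}$ or $f=1$, bits $f_i\in\{0,1\}$): set $b=\max\{n,n_f,\lceil 5(\ell+2m+\ln n_f)\rceil,40\}$. If $f=1$ return $w$; if $f=0$ return $1$. Let $\hat{w}_1,\dots,\hat{w}_{n_f}$ be the outputs of PowerOf2Roots$(w,n_f,n,m,b)$. Set $\hat{z}=1$; for $i=1,\dots,n_f$, if $f_i=1$ replace $\hat{z}$ by $\hat{z}\hat{w}_i$ truncated to $b$ bits after the binary point. Return $\hat{z}$. *)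

From Stdlib Require Import Reals ZArith Arith.
Open Scope R_scope.

Definition floorR (x : R) : Z := (up x - 1)%Z.
Definition ceilR (x : R) : Z := (- floorR (- x))%Z.

Definition trunc (b : nat) (x : R) : R := IZR (floorR (2 ^ b * x)) / 2 ^ b.

Definition flog2 (x : R) : Z := floorR (ln x / ln 2).

(* Newton iteration for 1/w : x_i = -w xhat_{i-1}^2 + 2 xhat_{i-1}, then truncate *)
Fixpoint inv_iter (b : nat) (w x0 : R) (k : nat) : R :=
  match k with
  | O => x0
  | S k' => let xh := inv_iter b w x0 k' in trunc b (- w * xh ^ 2 + 2 * xh)
  end.

(* Newton iteration for 1/sqrt(x) : y_j = (3 yhat_{j-1} - x yhat_{j-1}^3)/2, then truncate *)
Fixpoint isqrt_iter (b : nat) (x y0 : R) (k : nat) : R :=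
  match k with
  | O => y0
  | S k' => let yh := isqrt_iter b x y0 k' in trunc b ((3 * yh - x * yh ^ 3) / 2)
  end.

(* Algorithm SQRT(w,n,m,b); the parameters n, m only describe the input format
   and do not influence the computation. *)
Definition SQRT (b : nat) (w : R) : R :=
  if Req_EM_T w 1 then 1 else
  let p : nat := (Z.to_nat (flog2 w) + 1)%nat in
  let s : nat := Nat.log2_up b in
  let xs := inv_iter b w (/ 2 ^ p) s in
  let q : Z := (- flog2 xs)%Z in
  let y0 := powerRZ 2 (Z.div (q - 1) 2) in
  isqrt_iter b xs y0 s.

Definition pow2root (b : nat) (w : R) (i : nat) : R := Nat.iter i (SQRT b) w.

(* i-th bit after the binary point of f (for f in [0,1)) *)
Definition fbit (f : R) (i : nat) : bool := Z.odd (floorR (2 ^ i * f)).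

Fixpoint frac_loop (b : nat) (w f : R) (i : nat) : R :=
  match i with
  | O => 1
  | S i' => let z := frac_loop b w f i' in
            if fbit f (S i') then trunc b (z * pow2root b w (S i')) else z
  end.

Definition fp_b (n m nf l : nat) : nat :=
  Nat.max (Nat.max n nf)
    (Nat.max (Z.to_nat (ceilR (5 * (INR l + 2 * INR m + ln (INR nf))))) 40).

Definition FractionalPower (w f : R) (n m nf l : nat) : R :=
  let b := fp_b n m nf l in
  if Req_EM_T f 1 then w else
  if Req_EM_T f 0 then 1 else
  frac_loop b w f nf.

Fixpoint bitsum (bits : nat -> bool) (e : Z) (k : nat) : R :=
  match k with
  | O => 0
  | S k' => bitsum bits e k' + (if bits k' then powerRZ 2 (e + Z.of_nat k') else 0)
  end.

(* w is given by n bits of which the first m are its integer part: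
   w = sum_{j=m-n}^{m-1} w^(j) 2^j *)
Definition fixed_repr (n m : nat) (w : R) : Prop :=
  exists bits : nat -> bool, w = bitsum bits (Z.of_nat m - Z.of_nat n) n.

(* f in [0,1] given with nf bits after the binary point:
   f = 1, or f = sum_{i=1}^{nf} f_i 2^(-i) *)
Definition frac_repr (nf : nat) (f : R) : Prop :=
  f = 1 \/ exists bits : nat -> bool, f = bitsum bits (- Z.of_nat nf) nf.

From Stdlib Require Import Reals ZArith Arith Lra Lia Psatz.
Open Scope R_scope.

(* Each call to SQRT runs two truncated Newton iterations, for 1/z and then for the inverse square
   root of that approximation.  Their relative residuals 1 - z x and 1 - x y^2 are squared at every
   step, up to the truncation error 2^-b, so after ceil(log2 b) steps both are below
   E = (3/4)^b + 9 2^m / 2^b, and SQRT is accurate to 2^(m+1) E on [1/2, 2^m].  Taking a square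
   root contracts distances near 1, so the iterated roots w^(2^-k) all carry an error of order
   2^m E instead of accumulating one.  The product loop multiplies at most nf of them, which makes
   its relative error grow only linearly in nf; the choice of b turns the resulting bound
   14 nf 4^m E into 2^(1-l).  Finally, replacing f by F costs w ln w |F - f|, by convexity of
   the exponential. *)

Lemma floorR_spec (x : R) : IZR (floorR x) <= x < IZR (floorR x) + 1.
Proof. unfold floorR; rewrite minus_IZR; destruct (archimed x); lra. Qed.

Lemma floorR_unique (z : Z) (x : R) : IZR z <= x < IZR z + 1 -> floorR x = z.
Proof.
  intros [H1 H2]; destruct (floorR_spec x) as [H3 H4].
  assert (z < floorR x + 1)%Z by (apply lt_IZR; rewrite plus_IZR; lra).
  assert (floorR x < z + 1)%Z by (apply lt_IZR; rewrite plus_IZR; lra).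
  lia.
Qed.

Lemma floorR_nonneg (x : R) : 0 <= x -> 0 <= IZR (floorR x).
Proof.
  intro Hx; destruct (floorR_spec x) as [_ H].
  apply IZR_le; assert (-1 < floorR x)%Z by (apply lt_IZR; lra); lia.
Qed.

Lemma Rdiv_le_0_compat (a c : R) : 0 <= a -> 0 < c -> 0 <= a / c.
Proof. intros; apply Rmult_le_pos; [auto | left; apply Rinv_0_lt_compat; auto]. Qed.

Lemma Rabs_le_inv (x a : R) : Rabs x <= a -> - a <= x <= a.
Proof. intro H; pose proof (Rle_abs x); pose proof (Rle_abs (- x)); rewrite Rabs_Ropp in *; lra. Qed.

Lemma pow2_pos (n : nat) : 0 < 2 ^ n.
Proof. apply pow_lt; lra. Qed.

Lemma trunc_spec (b : nat) (x : R) : trunc b x <= x < trunc b x + / 2 ^ b.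
Proof.
  unfold trunc; destruct (floorR_spec (2 ^ b * x)) as [H1 H2].
  pose proof (pow2_pos b); split.
  - apply (Rmult_le_reg_l (2 ^ b)); auto; field_simplify; lra.
  - apply (Rmult_lt_reg_l (2 ^ b)); auto; field_simplify; lra.
Qed.

Lemma trunc_nonneg (b : nat) (x : R) : 0 <= x -> 0 <= trunc b x.
Proof.
  intro Hx; pose proof (pow2_pos b); unfold trunc, Rdiv.
  apply Rmult_le_pos; [apply floorR_nonneg; nra | left; apply Rinv_0_lt_compat; auto].
Qed.

Lemma exp_le_compat (x y : R) : x <= y -> exp x <= exp y.
Proof. intros [H | ->]; [left; apply exp_increasing; auto | lra]. Qed.

Lemma powerRZ2_le (k k' : Z) : (k <= k')%Z -> powerRZ 2 k <= powerRZ 2 k'.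
Proof.
  intro H; rewrite !powerRZ_Rpower by lra.
  apply Rle_Rpower; [lra | apply IZR_le; auto].
Qed.

Lemma flog2_spec (x : R) : 0 < x -> powerRZ 2 (flog2 x) <= x < powerRZ 2 (flog2 x + 1).
Proof.
  intro Hx; rewrite !powerRZ_Rpower, plus_IZR by lra; unfold Rpower, flog2.
  destruct (floorR_spec (ln x / ln 2)) as [H1 H2].
  assert (Hln2 : 0 < ln 2) by (rewrite <- ln_1; apply ln_increasing; lra).
  set (k := floorR (ln x / ln 2)) in *.
  assert (IZR k * ln 2 <= ln x).
  { apply (Rmult_le_reg_r (/ ln 2)); [apply Rinv_0_lt_compat; auto |].
    unfold Rdiv in H1; field_simplify; lra. }
  assert (ln x < (IZR k + 1) * ln 2).
  { apply (Rmult_lt_reg_r (/ ln 2)); [apply Rinv_0_lt_compat; auto |].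
    unfold Rdiv in H2; field_simplify; lra. }
  rewrite <- (exp_ln x) by auto; split.
  - apply exp_le_compat; auto.
  - apply exp_increasing; auto.
Qed.

Lemma pow_le1_antitone (x : R) (m n : nat) : 0 <= x <= 1 -> (m <= n)%nat -> x ^ n <= x ^ m.
Proof.
  intros Hx Hmn; replace n with (m + (n - m))%nat by lia; rewrite pow_add.
  assert (0 <= x ^ m) by (apply pow_le; lra).
  assert (x ^ (n - m) <= 1) by (rewrite <- (pow1 (n - m)); apply pow_incr; lra).
  assert (0 <= x ^ (n - m)) by (apply pow_le; lra).
  nra.
Qed.

Lemma quadratic_recurrence_bound (e : nat -> R) (eta : R) :
  0 <= eta <= / 100 -> (forall i, 0 <= e i <= 3/4) ->
  (forall i, e (S i) <= e i ^ 2 + eta) ->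
  forall i, (2 <= i)%nat -> e i <= (3/4) ^ (2 ^ i) + 3 * eta.
Proof.
  intros Heta Hb Hs i Hi; replace i with (i - 2 + 2)%nat by lia.
  induction (i - 2)%nat as [| j IH].
  - pose proof (Hs 0%nat); pose proof (Hs 1%nat).
    destruct (Hb 0%nat), (Hb 1%nat); simpl in *.
    assert (e 1%nat <= 9/16 + eta) by nra.
    assert (e 1%nat ^ 2 <= (9/16 + eta) ^ 2) by (apply pow_incr; lra).
    simpl in *; nra.
  - replace (S j + 2)%nat with (S (j + 2)) by lia.
    set (A := (3/4) ^ (2 ^ (j + 2))) in *.
    assert (HA : (3/4) ^ (2 ^ S (j + 2)) = A ^ 2).
    { unfold A; rewrite <- pow_mult; f_equal; rewrite Nat.pow_succ_r'; lia. }
    assert (0 <= A) by (apply pow_le; lra).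
    assert (A <= (3/4) ^ 4).
    { apply pow_le1_antitone; [lra |].
      change 4%nat with (2 ^ 2)%nat; apply Nat.pow_le_mono_r; lia. }
    rewrite HA; specialize (Hs (j + 2)%nat); destruct (Hb (j + 2)%nat).
    simpl in *; nra.
Qed.

Section InverseNewton.
Variables (b : nat) (z x0 : R).
Hypothesis z_pos : 0 < z.
Hypothesis residual0 : 0 <= 1 - z * x0 <= 3/4.
Hypothesis eta_small : z / 2 ^ b <= / 100.

Lemma inv_iter_residual_step (i : nat) :
  0 <= 1 - z * inv_iter b z x0 i <= 3/4 ->
  0 <= 1 - z * inv_iter b z x0 (S i) <= (1 - z * inv_iter b z x0 i) ^ 2 + z / 2 ^ b.
Proof.
  cbn [inv_iter]; set (x := inv_iter b z x0 i); intro H.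
  destruct (trunc_spec b (- z * x ^ 2 + 2 * x)) as [T1 T2].
  set (t := trunc b (- z * x ^ 2 + 2 * x)) in *.
  pose proof (pow2_pos b).
  assert (E : 1 - z * (- z * x ^ 2 + 2 * x) = (1 - z * x) ^ 2) by ring.
  assert (z * (- z * x ^ 2 + 2 * x - t) <= z / 2 ^ b) by (unfold Rdiv; apply Rmult_le_compat_l; lra).
  assert (z * t <= z * (- z * x ^ 2 + 2 * x)) by (apply Rmult_le_compat_l; lra).
  pose proof (pow2_ge_0 (1 - z * x)); lra.
Qed.

Lemma inv_iter_residual_bounded (i : nat) : 0 <= 1 - z * inv_iter b z x0 i <= 3/4.
Proof.
  induction i as [| i IH]; [exact residual0 |].
  destruct (inv_iter_residual_step i IH).
  assert (0 <= z / 2 ^ b) by (pose proof (pow2_pos b); apply Rdiv_le_0_compat; lra).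
  nra.
Qed.

Lemma inv_iter_residual (i : nat) : (2 <= i)%nat ->
  1 - z * inv_iter b z x0 i <= (3/4) ^ (2 ^ i) + 3 * (z / 2 ^ b).
Proof.
  apply quadratic_recurrence_bound with (e := fun i => 1 - z * inv_iter b z x0 i).
  - split; [pose proof (pow2_pos b); apply Rdiv_le_0_compat; lra | exact eta_small].
  - exact inv_iter_residual_bounded.
  - intro j; apply inv_iter_residual_step, inv_iter_residual_bounded.
Qed.

End InverseNewton.

Section InverseSqrtNewton.
Variables (b : nat) (x y0 : R).
Hypothesis x_range : 0 < x <= 2.
Hypothesis y0_nonneg : 0 <= y0.
Hypothesis residual0 : 0 <= 1 - x * y0 ^ 2 <= 3/4.
Hypothesis eta_small : 3 / 2 ^ b <= / 100.

Lemma isqrt_iter_residual_step (i : nat) :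
  0 <= isqrt_iter b x y0 i -> 0 <= 1 - x * isqrt_iter b x y0 i ^ 2 <= 3/4 ->
  0 <= isqrt_iter b x y0 (S i) /\
  0 <= 1 - x * isqrt_iter b x y0 (S i) ^ 2 <= (1 - x * isqrt_iter b x y0 i ^ 2) ^ 2 + 3 / 2 ^ b.
Proof.
  cbn [isqrt_iter]; set (y := isqrt_iter b x y0 i); intros Hy H.
  set (e := 1 - x * y ^ 2) in *.
  set (u := (3 * y - x * y ^ 3) / 2).
  assert (Hu : u = y * (2 + e) / 2) by (unfold u, e; field).
  assert (Hres : 1 - x * u ^ 2 = (3 * e ^ 2 + e ^ 3) / 4) by (rewrite Hu; unfold e; field).
  assert (U0 : 0 <= u) by (rewrite Hu; apply Rmult_le_pos; [apply Rmult_le_pos |]; lra).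
  destruct (trunc_spec b u) as [T1 T2]; pose proof (trunc_nonneg b u U0) as T0.
  set (t := trunc b u) in *.
  pose proof (pow2_pos b).
  assert (x * u ^ 2 <= 1) by (pose proof (pow2_ge_0 e); pose proof (pow_le e 3 ltac:(lra)); lra).
  assert (Hxu : x * (2 * u) <= 3).
  { assert (2 * u <= 1 + u ^ 2) by (pose proof (pow2_ge_0 (u - 1)); nra).
    assert (x * (2 * u) <= x * (1 + u ^ 2)) by (apply Rmult_le_compat_l; lra).
    nra. }
  assert (x * (u ^ 2 - t ^ 2) <= 3 / 2 ^ b).
  { replace (u ^ 2 - t ^ 2) with ((u - t) * (u + t)) by ring.
    assert (x * ((u - t) * (u + t)) <= / 2 ^ b * (x * (2 * u))).
    { replace (x * ((u - t) * (u + t))) with ((u - t) * (x * (u + t))) by ring.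
      apply Rmult_le_compat; nra. }
    unfold Rdiv; nra. }
  assert (t ^ 2 <= u ^ 2) by nra.
  repeat split; nra.
Qed.

Lemma isqrt_iter_residual_bounded (i : nat) :
  0 <= isqrt_iter b x y0 i /\ 0 <= 1 - x * isqrt_iter b x y0 i ^ 2 <= 3/4.
Proof.
  induction i as [| i [IH1 IH2]]; [auto |].
  destruct (isqrt_iter_residual_step i IH1 IH2) as [? [? ?]].
  assert (0 <= 3 / 2 ^ b) by (pose proof (pow2_pos b); apply Rdiv_le_0_compat; lra).
  split; [auto | nra].
Qed.

Lemma isqrt_iter_residual (i : nat) : (2 <= i)%nat ->
  1 - x * isqrt_iter b x y0 i ^ 2 <= (3/4) ^ (2 ^ i) + 3 * (3 / 2 ^ b).
Proof.
  apply quadratic_recurrence_bound with (e := fun i => 1 - x * isqrt_iter b x y0 i ^ 2).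
  - split; [pose proof (pow2_pos b); apply Rdiv_le_0_compat; lra | exact eta_small].
  - intro j; apply isqrt_iter_residual_bounded.
  - intro j; destruct (isqrt_iter_residual_bounded j); apply isqrt_iter_residual_step; auto.
Qed.

End InverseSqrtNewton.

Lemma sqrt_approx_of_residuals (z xs y E : R) :
  0 < z -> 0 <= y -> 0 <= E <= / 2 ->
  0 <= 1 - z * xs <= E -> 0 <= 1 - xs * y ^ 2 <= E ->
  Rabs (y - sqrt z) <= 2 * sqrt z * E.
Proof.
  intros Hz Hy HE Hex Hey.
  set (r := sqrt z).
  assert (Hr2 : r * r = z) by (apply sqrt_sqrt; lra).
  assert (Hr0 : 0 < r) by (apply sqrt_lt_R0; lra).
  assert (Hxs : 0 < xs) by nra.
  (* xs (y^2 - z) is the difference of the two residuals, and xs z >= 1/2 *)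
  assert (K : xs * (y ^ 2 - z) = (1 - z * xs) - (1 - xs * y ^ 2)) by ring.
  assert (Hsq : Rabs (y ^ 2 - z) <= 2 * z * E).
  { apply Rabs_le; split.
    - assert (xs * (y ^ 2 - z) >= xs * (- 2 * z * E)) by nra; nra.
    - assert (xs * (y ^ 2 - z) <= xs * (2 * z * E)) by nra; nra. }
  assert (Hfac : y ^ 2 - z = (y - r) * (y + r)) by (rewrite <- Hr2; ring).
  rewrite Hfac, <- Hr2, Rabs_mult, (Rabs_right (y + r)) in Hsq by lra.
  assert (Rabs (y - r) * r <= 2 * r * E * r).
  { assert (Rabs (y - r) * r <= Rabs (y - r) * (y + r))
      by (apply Rmult_le_compat_l; [apply Rabs_pos | lra]).
    nra. }
  apply (Rmult_le_reg_r r); auto.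
Qed.

Lemma inv_initial_residual (z : R) :
  / 2 <= z -> 0 <= 1 - z * / 2 ^ (Z.to_nat (flog2 z) + 1) <= 3/4.
Proof.
  intro Hz.
  destruct (flog2_spec z ltac:(lra)) as [Hk1 Hk2].
  set (k := flog2 z) in *; set (p := (Z.to_nat k + 1)%nat).
  assert (Hk : (-1 <= k)%Z).
  { destruct (Z_lt_le_dec k (-1)) as [Hlt |]; auto.
    assert (powerRZ 2 (k + 1) <= powerRZ 2 (-1)) by (apply powerRZ2_le; lia).
    simpl in *; lra. }
  assert (Hp : 2 ^ p = powerRZ 2 (Z.of_nat p)) by apply pow_powerRZ.
  assert (powerRZ 2 (Z.of_nat p) / 4 <= z).
  { assert (Hle : powerRZ 2 (Z.of_nat p + -2) <= powerRZ 2 k) by (apply powerRZ2_le; unfold p; lia).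
    rewrite powerRZ_add in Hle by lra; simpl in Hle; lra. }
  assert (z < powerRZ 2 (Z.of_nat p)).
  { assert (powerRZ 2 (k + 1) <= powerRZ 2 (Z.of_nat p)) by (apply powerRZ2_le; unfold p; lia).
    lra. }
  rewrite Hp; pose proof (powerRZ_lt 2 (Z.of_nat p) ltac:(lra)).
  split.
  - assert (z * / powerRZ 2 (Z.of_nat p) <= 1)
      by (apply (Rmult_le_reg_r (powerRZ 2 (Z.of_nat p))); auto; field_simplify; lra).
    lra.
  - assert (/ 4 <= z * / powerRZ 2 (Z.of_nat p))
      by (apply (Rmult_le_reg_r (powerRZ 2 (Z.of_nat p))); auto; field_simplify; lra).
    lra.
Qed.

Lemma isqrt_initial_residual (x : R) :
  0 < x -> 0 <= 1 - x * powerRZ 2 ((- flog2 x - 1) / 2) ^ 2 <= 3/4.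
Proof.
  intro Hx.
  destruct (flog2_spec x Hx) as [Hk1 Hk2].
  set (k := flog2 x) in *; set (d := ((- k - 1) / 2)%Z).
  (* 2 d is -k-1 or -k-2, so x 2^(2d) lies in [1/4, 1] *)
  assert (Hdm := Z.div_mod (- k - 1) 2 ltac:(lia)).
  assert (Hdb := Z.mod_pos_bound (- k - 1) 2 ltac:(lia)); fold d in Hdm.
  assert (Hy2 : powerRZ 2 d ^ 2 = powerRZ 2 (d + d)) by (rewrite powerRZ_add by lra; ring).
  rewrite Hy2; split.
  - assert (powerRZ 2 (d + d) <= powerRZ 2 (- k - 1)) by (apply powerRZ2_le; lia).
    assert (Hprod : x * powerRZ 2 (d + d) <= powerRZ 2 (k + 1) * powerRZ 2 (- k - 1)).
    { apply Rmult_le_compat; try lra; apply powerRZ_le; lra. }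
    rewrite <- powerRZ_add in Hprod by lra.
    replace (k + 1 + (- k - 1))%Z with 0%Z in Hprod by lia; simpl in Hprod; lra.
  - assert (powerRZ 2 (- k - 2) <= powerRZ 2 (d + d)) by (apply powerRZ2_le; lia).
    assert (Hprod : powerRZ 2 k * powerRZ 2 (- k - 2) <= x * powerRZ 2 (d + d)).
    { apply Rmult_le_compat; try lra; apply powerRZ_le; lra. }
    rewrite <- powerRZ_add in Hprod by lra.
    replace (k + (- k - 2))%Z with (-2)%Z in Hprod by lia; simpl in Hprod; lra.
Qed.

Definition sqrt_residual_bound (b m : nat) : R := (3/4) ^ b + 9 * 2 ^ m / 2 ^ b.

Lemma log2_up_facts (b : nat) : (3 <= b)%nat -> (2 <= Nat.log2_up b)%nat /\ (b <= 2 ^ Nat.log2_up b)%nat.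
Proof.
  intro Hb; destruct (Nat.log2_up_spec b) as [H1 H2]; [lia |].
  split; [| lia].
  destruct (le_lt_dec 2 (Nat.log2_up b)) as [| Hlt]; auto.
  assert (2 ^ Nat.log2_up b <= 2 ^ 1)%nat by (apply Nat.pow_le_mono_r; lia).
  simpl in *; lia.
Qed.

Lemma SQRT_inverse_residual (b m : nat) (z : R) :
  (3 <= b)%nat -> 2 <= 2 ^ m -> 2 ^ m * sqrt_residual_bound b m <= / 12 ->
  / 2 <= z <= 2 ^ m ->
  0 <= 1 - z * inv_iter b z (/ 2 ^ (Z.to_nat (flog2 z) + 1)) (Nat.log2_up b)
    <= sqrt_residual_bound b m.
Proof.
  intros Hb Hm Hbudget Hz; unfold sqrt_residual_bound in *; unfold Rdiv in *.
  pose proof (Rinv_0_lt_compat _ (pow2_pos b)); pose proof (pow_le (3/4) b ltac:(lra)).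
  destruct (log2_up_facts b Hb) as [Hs2 Hsb].
  assert ((3/4) ^ (2 ^ Nat.log2_up b) <= (3/4) ^ b) by (apply pow_le1_antitone; lra || lia).
  assert (z * / 2 ^ b <= 2 ^ m * / 2 ^ b) by (apply Rmult_le_compat_r; lra).
  assert (2 ^ m * / 2 ^ b <= / 100) by nra.
  split.
  - apply inv_iter_residual_bounded; [lra | apply inv_initial_residual | ]; lra.
  - eapply Rle_trans; [apply inv_iter_residual; auto; [lra | apply inv_initial_residual | ]; lra |].
    nra.
Qed.

Lemma SQRT_isqrt_residual (b m : nat) (x : R) :
  (3 <= b)%nat -> 2 <= 2 ^ m -> 2 ^ m * sqrt_residual_bound b m <= / 12 -> 0 < x <= 2 ->
  0 <= isqrt_iter b x (powerRZ 2 ((- flog2 x - 1) / 2)) (Nat.log2_up b) /\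
  0 <= 1 - x * isqrt_iter b x (powerRZ 2 ((- flog2 x - 1) / 2)) (Nat.log2_up b) ^ 2
    <= sqrt_residual_bound b m.
Proof.
  intros Hb Hm Hbudget Hx; unfold sqrt_residual_bound in *; unfold Rdiv in *.
  pose proof (Rinv_0_lt_compat _ (pow2_pos b)); pose proof (pow_le (3/4) b ltac:(lra)).
  destruct (log2_up_facts b Hb) as [Hs2 Hsb].
  assert ((3/4) ^ (2 ^ Nat.log2_up b) <= (3/4) ^ b) by (apply pow_le1_antitone; lra || lia).
  pose proof (powerRZ_le 2 ((- flog2 x - 1) / 2) ltac:(lra)) as Hy0.
  pose proof (isqrt_initial_residual x ltac:(lra)) as Hres0.
  assert (Heta : 3 / 2 ^ b <= / 100) by (unfold Rdiv; nra).
  destruct (isqrt_iter_residual_bounded b x _ Hx Hy0 Hres0 Heta (Nat.log2_up b)) as [Hy [Hey _]].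
  pose proof (isqrt_iter_residual b x _ Hx Hy0 Hres0 Heta _ Hs2).
  unfold Rdiv in *; repeat split; auto; nra.
Qed.

Lemma SQRT_error (b m : nat) (z : R) :
  (3 <= b)%nat -> 2 <= 2 ^ m -> 2 ^ m * sqrt_residual_bound b m <= / 12 ->
  / 2 <= z <= 2 ^ m ->
  Rabs (SQRT b z - sqrt z) <= 2 * 2 ^ m * sqrt_residual_bound b m.
Proof.
  intros Hb Hm Hbudget Hz.
  pose proof (SQRT_inverse_residual b m z Hb Hm Hbudget Hz) as Hex.
  set (E := sqrt_residual_bound b m) in *.
  assert (HE : 0 <= E <= / 2) by (split; nra).
  assert (Hsqrt : sqrt z <= 2 ^ m).
  { pose proof (sqrt_pos z); apply Rsqr_incr_0_var; [unfold Rsqr | lra].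
    rewrite sqrt_sqrt; nra. }
  unfold SQRT; destruct (Req_EM_T z 1) as [-> | _].
  { rewrite sqrt_1, Rminus_diag, Rabs_R0; nra. }
  cbv zeta.
  set (xs := inv_iter b z (/ 2 ^ (Z.to_nat (flog2 z) + 1)) (Nat.log2_up b)) in *.
  assert (Hxs : 0 < xs <= 2) by nra.
  destruct (SQRT_isqrt_residual b m xs Hb Hm Hbudget Hxs) as [Hy Hey].
  apply Rle_trans with (2 * sqrt z * E).
  - apply (sqrt_approx_of_residuals z xs); auto; lra.
  - pose proof (sqrt_pos z); apply Rmult_le_compat_r; nra.
Qed.

Lemma sqrt_dist_le (a c : R) : / 2 <= a -> 1 <= c ->
  Rabs (sqrt a - sqrt c) <= Rabs (a - c) / (17/10).
Proof.
  intros Ha Hc.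
  pose proof (sqrt_pos a); pose proof (sqrt_pos c).
  set (sa := sqrt a) in *; set (sc := sqrt c) in *.
  assert (Ea : sa * sa = a) by (apply sqrt_sqrt; lra).
  assert (Ec : sc * sc = c) by (apply sqrt_sqrt; lra).
  assert (7/10 <= sa) by nra.
  assert (1 <= sc) by nra.
  assert (Hac : a - c = (sa - sc) * (sa + sc)) by (rewrite <- Ea, <- Ec; ring).
  rewrite Hac, Rabs_mult, (Rabs_right (sa + sc)) by lra.
  apply (Rmult_le_reg_r (17/10)); [lra |]; field_simplify.
  pose proof (Rabs_pos (sa - sc)); nra.
Qed.

Lemma sqrt_add_half_le (M : R) : 2 <= M -> sqrt M + / 2 <= M.
Proof.
  intro HM; pose proof (sqrt_pos M); pose proof (sqrt_sqrt M ltac:(lra)); nra.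
Qed.

Lemma Rpower_ge1 (w y : R) : 1 < w -> 0 <= y -> 1 <= Rpower w y.
Proof. intros; rewrite <- (Rpower_O w) by lra; apply Rle_Rpower; lra. Qed.

Lemma Rpower_root_bounds (w : R) (k : nat) : 1 < w ->
  1 <= Rpower w (/ 2 ^ S k) <= sqrt w.
Proof.
  intro Hw.
  assert (Hk : 1 <= 2 ^ k) by (apply pow_R1_Rle; lra).
  split.
  - apply Rpower_ge1; [lra | left; apply Rinv_0_lt_compat, pow2_pos].
  - rewrite <- Rpower_sqrt by lra; apply Rle_Rpower; [lra |]; simpl.
    apply Rinv_le_contravar; nra.
Qed.

Section IteratedRoots.
Variables (b m : nat) (w eps : R).
Hypothesis w_range : 1 < w <= 2 ^ m.
Hypothesis m_pos : 2 <= 2 ^ m.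
Hypothesis eps_small : 0 <= eps <= / 6.
Hypothesis SQRT_accurate : forall z, / 2 <= z <= 2 ^ m -> Rabs (SQRT b z - sqrt z) <= eps.

(* sqrt contracts distances on [1/2, oo) by the factor 1/1.7, so an error 3 eps in one root
   leaves at most eps + 3 eps / 1.7 <= 3 eps in the next. *)
Lemma pow2root_error (k : nat) :
  Rabs (pow2root b w (S k) - Rpower w (/ 2 ^ S k)) <= 3 * eps.
Proof.
  induction k as [| k IH].
  - change (pow2root b w 1) with (SQRT b w).
    simpl; rewrite Rmult_1_r, Rpower_sqrt by lra.
    assert (Rabs (SQRT b w - sqrt w) <= eps) by (apply SQRT_accurate; lra); lra.
  - set (wh := pow2root b w (S k)) in *; set (W := Rpower w (/ 2 ^ S k)) in *.
    change (pow2root b w (S (S k))) with (SQRT b wh).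
    destruct (Rpower_root_bounds w k) as [HW1 HW2]; [lra | fold W in HW1, HW2].
    assert (sqrt w + / 2 <= 2 ^ m).
    { assert (sqrt w <= sqrt (2 ^ m)) by (apply sqrt_le_1_alt; lra).
      pose proof (sqrt_add_half_le _ m_pos); lra. }
    assert (Hwh : / 2 <= wh <= 2 ^ m) by (apply Rabs_le_inv in IH; lra).
    assert (HE : Rpower w (/ 2 ^ S (S k)) = sqrt W).
    { rewrite <- (Rpower_sqrt W) by lra; unfold W; rewrite Rpower_mult; f_equal.
      simpl; field; apply pow_nonzero; lra. }
    rewrite HE.
    pose proof (SQRT_accurate wh Hwh); pose proof (sqrt_dist_le wh W ltac:(lra) HW1).
    replace (SQRT b wh - sqrt W) with ((SQRT b wh - sqrt wh) + (sqrt wh - sqrt W)) by ring.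
    eapply Rle_trans; [apply Rabs_triang |].
    assert (Rabs (wh - W) / (17/10) <= 3 * eps / (17/10))
      by (apply Rmult_le_compat_r; lra).
    lra.
Qed.

End IteratedRoots.

Lemma trunc_S (f : R) (k : nat) :
  trunc (S k) f = trunc k f + (if fbit f (S k) then / 2 ^ S k else 0).
Proof.
  unfold trunc, fbit.
  destruct (floorR_spec (2 ^ k * f)) as [H1 H2].
  set (A := floorR (2 ^ k * f)) in *.
  assert (Hs : 2 ^ S k * f = 2 * (2 ^ k * f)) by (simpl; ring).
  pose proof (pow2_pos k).
  assert (HB : floorR (2 ^ S k * f) = (2 * A + (if Z.odd (floorR (2 ^ S k * f)) then 1 else 0))%Z).
  { destruct (Rlt_dec (2 ^ S k * f) (IZR (2 * A + 1))) as [Hlt | Hge].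
    - assert (E : floorR (2 ^ S k * f) = (2 * A)%Z).
      { apply floorR_unique; rewrite mult_IZR; rewrite plus_IZR, mult_IZR in Hlt; lra. }
      rewrite E, Z.odd_even; lia.
    - assert (E : floorR (2 ^ S k * f) = (2 * A + 1)%Z).
      { apply floorR_unique; rewrite plus_IZR, mult_IZR; rewrite plus_IZR, mult_IZR in Hge; lra. }
      rewrite E, Z.odd_odd; lia. }
  rewrite HB at 1; destruct (Z.odd (floorR (2 ^ S k * f))).
  - rewrite plus_IZR, mult_IZR; simpl; field; lra.
  - rewrite Z.add_0_r, mult_IZR; simpl; field; lra.
Qed.

Lemma trunc_0 (f : R) : 0 <= f < 1 -> trunc 0 f = 0.
Proof.
  intro Hf; unfold trunc; simpl.
  rewrite (floorR_unique 0) by (simpl; lra); simpl; field.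
Qed.

Lemma trunc_mul_error (b : nat) (z wh P W D delta : R) :
  1 <= P -> 1 <= W -> 0 <= delta ->
  Rabs (z - P) <= D -> Rabs (wh - W) <= delta ->
  Rabs (trunc b (z * wh) - P * W) <= (D * (1 + delta) + (delta + / 2 ^ b) * P) * W.
Proof.
  intros HP HW Hdelta Hz Hwh.
  pose proof (Rinv_0_lt_compat _ (pow2_pos b)) as HT.
  destruct (trunc_spec b (z * wh)) as [T1 T2].
  assert (Habs_wh : Rabs wh <= W * (1 + delta)).
  { apply Rabs_le_inv in Hwh; apply Rabs_le; nra. }
  replace (trunc b (z * wh) - P * W)
    with ((trunc b (z * wh) - z * wh) + (z - P) * wh + P * (wh - W)) by ring.
  eapply Rle_trans; [apply Rabs_triang |].
  eapply Rle_trans; [apply Rplus_le_compat_r, Rabs_triang |].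
  rewrite !Rabs_mult, (Rabs_right P) by lra.
  assert (Rabs (trunc b (z * wh) - z * wh) <= / 2 ^ b) by (apply Rabs_le; lra).
  assert (Rabs (z - P) * Rabs wh <= D * (W * (1 + delta)))
    by (apply Rmult_le_compat; auto; apply Rabs_pos).
  assert (P * Rabs (wh - W) <= P * delta) by (apply Rmult_le_compat_l; lra).
  assert (/ 2 ^ b * 1 <= / 2 ^ b * (P * W)) by (apply Rmult_le_compat_l; nra).
  assert (P * delta * 1 <= P * delta * W) by (apply Rmult_le_compat_l; nra).
  lra.
Qed.

Section ProductLoop.
Variables (b : nat) (w f delta : R).
Hypothesis w_gt1 : 1 < w.
Hypothesis f_range : 0 <= f < 1.
Hypothesis delta_nonneg : 0 <= delta.
Hypothesis roots_accurate :
  forall k, Rabs (pow2root b w (S k) - Rpower w (/ 2 ^ S k)) <= delta.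

Lemma frac_loop_error (k : nat) :
  Rabs (frac_loop b w f k - Rpower w (trunc k f))
    <= INR k * (delta + / 2 ^ b) * (1 + delta) ^ k * Rpower w (trunc k f).
Proof.
  pose proof (Rinv_0_lt_compat _ (pow2_pos b)) as HT.
  induction k as [| k IH].
  - simpl; rewrite trunc_0, Rpower_O, Rminus_diag, Rabs_R0 by lra; lra.
  - set (P := Rpower w (trunc k f)) in *.
    assert (HP : 1 <= P) by (apply Rpower_ge1; [lra | apply trunc_nonneg; lra]).
    assert (Hq : 1 <= (1 + delta) ^ k) by (apply pow_R1_Rle; lra).
    set (q := (1 + delta) ^ k) in *.
    assert (HX : 0 <= (delta + / 2 ^ b) * P) by nra.
    change (frac_loop b w f (S k)) with
      (if fbit f (S k) then trunc b (frac_loop b w f k * pow2root b w (S k)) else frac_loop b w f k).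
    rewrite trunc_S, S_INR; change ((1 + delta) ^ S k) with ((1 + delta) * q).
    destruct (fbit f (S k)).
    + rewrite Rpower_plus; fold P.
      set (W := Rpower w (/ 2 ^ S k)).
      assert (HW : 1 <= W) by (apply Rpower_ge1; [lra | left; apply Rinv_0_lt_compat, pow2_pos]).
      eapply Rle_trans;
        [apply (trunc_mul_error b _ _ P W (INR k * (delta + / 2 ^ b) * q * P) delta); auto |].
      assert ((delta + / 2 ^ b) * P * W * 1 <= (delta + / 2 ^ b) * P * W * ((1 + delta) * q))
        by (apply Rmult_le_compat_l; nra).
      lra.
    + rewrite Rplus_0_r; fold P.
      assert (INR k * q * 1 <= INR k * q * (1 + delta))
        by (apply Rmult_le_compat_l; [pose proof (pos_INR k); nra | lra]).
      assert (INR k * q * 1 * ((delta + / 2 ^ b) * P) <= INR k * q * (1 + delta) * ((delta + / 2 ^ b) * P))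
        by (apply Rmult_le_compat_r; lra).
      assert (0 <= (1 + delta) * q * ((delta + / 2 ^ b) * P)) by (apply Rmult_le_pos; nra).
      lra.
Qed.

End ProductLoop.

Lemma bitsum_bounds (bits : nat -> bool) (e : Z) (k : nat) :
  0 <= bitsum bits e k <= powerRZ 2 (e + Z.of_nat k) - powerRZ 2 e.
Proof.
  induction k as [| k IH]; simpl bitsum.
  - rewrite Z.add_0_r; lra.
  - replace (e + Z.of_nat (S k))%Z with (e + Z.of_nat k + 1)%Z by lia.
    rewrite (powerRZ_add 2 (e + Z.of_nat k) 1) by lra; replace (powerRZ 2 1) with 2 by (simpl; ring).
    pose proof (powerRZ_lt 2 (e + Z.of_nat k) ltac:(lra)).
    destruct (bits k); lra.
Qed.

Lemma fixed_repr_le (n m : nat) (w : R) : fixed_repr n m w -> w <= 2 ^ m.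
Proof.
  intros [bits ->].
  destruct (bitsum_bounds bits (Z.of_nat m - Z.of_nat n) n) as [_ Hub].
  replace (Z.of_nat m - Z.of_nat n + Z.of_nat n)%Z with (Z.of_nat m) in Hub by lia.
  rewrite <- pow_powerRZ in Hub.
  pose proof (powerRZ_lt 2 (Z.of_nat m - Z.of_nat n) ltac:(lra)); lra.
Qed.

Lemma bitsum_scaled_int (bits : nat -> bool) (nf k : nat) :
  exists N : Z, 2 ^ nf * bitsum bits (- Z.of_nat nf) k = IZR N.
Proof.
  induction k as [| k [N HN]]; simpl bitsum.
  - exists 0%Z; ring.
  - destruct (bits k).
    + exists (N + Z.of_nat (2 ^ k))%Z.
      rewrite plus_IZR, <- INR_IZR_INZ, pow_INR, Rmult_plus_distr_l, HN; f_equal.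
      rewrite pow_powerRZ, <- powerRZ_add by lra; simpl INR.
      replace (Z.of_nat nf + (- Z.of_nat nf + Z.of_nat k))%Z with (Z.of_nat k) by lia.
      symmetry; apply pow_powerRZ.
    + exists N; rewrite Rplus_0_r; auto.
Qed.

Lemma trunc_frac_repr (nf : nat) (bits : nat -> bool) (f : R) :
  f = bitsum bits (- Z.of_nat nf) nf -> trunc nf f = f.
Proof.
  intro Hf; destruct (bitsum_scaled_int bits nf nf) as [N HN]; rewrite <- Hf in HN.
  unfold trunc; rewrite HN, (floorR_unique N); [rewrite <- HN | lra].
  field; apply pow_nonzero; lra.
Qed.

Lemma exp_sub1_le (x : R) : 0 <= x -> exp x - 1 <= x * exp x.
Proof.
  intro Hx; pose proof (exp_ineq1_le (- x)) as Hneg; rewrite exp_Ropp in Hneg.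
  pose proof (exp_pos x).
  assert (Hmul : (1 - x) * exp x <= / exp x * exp x) by (apply Rmult_le_compat_r; lra).
  rewrite Rinv_l in Hmul by lra; nra.
Qed.

Lemma Rpower_increment_le (w a c : R) : 1 < w -> 0 <= a <= c -> c <= 1 ->
  0 <= Rpower w c - Rpower w a <= w * ln w * (c - a).
Proof.
  intros Hw Hac Hc1.
  assert (L : 0 < ln w) by (rewrite <- ln_1; apply ln_increasing; lra).
  assert (Hd : 0 <= (c - a) * ln w) by (apply Rmult_le_pos; lra).
  (* w^c = w^a w^(c-a) with w^(c-a) - 1 <= (c-a) ln w w^(c-a) and w^a w^(c-a) <= w *)
  unfold Rpower; replace (c * ln w) with (a * ln w + (c - a) * ln w) by ring.
  rewrite exp_plus.
  pose proof (exp_sub1_le _ Hd); pose proof (exp_pos (a * ln w)).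
  pose proof (exp_ineq1_le ((c - a) * ln w)).
  assert (exp (a * ln w) * exp ((c - a) * ln w) <= w).
  { rewrite <- exp_plus; apply Rle_trans with (exp (ln w)); [apply exp_le_compat; nra |].
    rewrite exp_ln; lra. }
  split; [nra |].
  assert (exp (a * ln w) * (exp ((c - a) * ln w) - 1)
            <= exp (a * ln w) * ((c - a) * ln w * exp ((c - a) * ln w)))
    by (apply Rmult_le_compat_l; lra).
  assert ((c - a) * ln w * (exp (a * ln w) * exp ((c - a) * ln w)) <= (c - a) * ln w * w)
    by (apply Rmult_le_compat_l; lra).
  nra.
Qed.

Lemma Rpower_lipschitz (w a c : R) : 1 < w -> 0 <= a <= 1 -> 0 <= c <= 1 ->
  Rabs (Rpower w a - Rpower w c) <= w * ln w * Rabs (a - c).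
Proof.
  intros Hw Ha Hc; destruct (Rle_dec a c).
  - destruct (Rpower_increment_le w a c) as [K1 K2]; try lra.
    rewrite Rabs_left1, (Rabs_left1 (a - c)) by lra; lra.
  - destruct (Rpower_increment_le w c a) as [K1 K2]; try lra.
    rewrite Rabs_right, (Rabs_right (a - c)) by lra; lra.
Qed.

Lemma exp_le_inv_one_minus (x : R) : x < 1 -> exp x <= / (1 - x).
Proof.
  intro Hx; pose proof (exp_ineq1_le (- x)) as Hneg; rewrite exp_Ropp in Hneg.
  rewrite <- (Rinv_inv (exp x)); apply Rinv_le_contravar; lra.
Qed.

Lemma exp_INR_mult (n : nat) (x : R) : exp (INR n * x) = exp x ^ n.
Proof.
  induction n as [| n IH]; [simpl; rewrite Rmult_0_l; apply exp_0 |].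
  rewrite S_INR, Rmult_plus_distr_r, Rmult_1_l, exp_plus, IH; simpl; ring.
Qed.

Lemma pow2_le_exp_INR (n : nat) : 2 ^ n <= exp (INR n).
Proof.
  rewrite <- (Rmult_1_r (INR n)), exp_INR_mult; apply pow_incr.
  pose proof (exp_ineq1_le 1); lra.
Qed.

Lemma pow_one_plus_le_two (d : R) (n : nat) : 0 <= d -> INR n * d <= / 2 -> (1 + d) ^ n <= 2.
Proof.
  intros Hd Hn.
  apply Rle_trans with (exp d ^ n); [apply pow_incr; pose proof (exp_ineq1_le d); lra |].
  rewrite <- exp_INR_mult; apply Rle_trans with (exp (/ 2)); [apply exp_le_compat; auto |].
  pose proof (exp_le_inv_one_minus (/ 2) ltac:(lra)) as Hexp.
  replace (/ (1 - / 2)) with 2 in Hexp by field; exact Hexp.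
Qed.

(* With b >= 5 (l + 2 m + ln nf): nf 2^l 4^m <= (5/4)^b and 2^m <= (10/9)^b. *)
Lemma sqrt_residual_budget (b m l nf : nat) : (40 <= b)%nat -> (1 <= nf)%nat ->
  5 * (INR l + 2 * INR m + ln (INR nf)) <= INR b ->
  INR nf * 2 ^ l * 4 ^ m * sqrt_residual_bound b m <= / 12.
Proof.
  intros Hb Hnf Hineq; unfold sqrt_residual_bound.
  assert (Hnf0 : 0 < INR nf) by (apply lt_0_INR; lia).
  assert (Hln : 0 <= ln (INR nf)).
  { rewrite <- ln_1; destruct (Nat.eq_dec nf 1) as [-> | Hne]; [simpl; lra |].
    left; apply ln_increasing; [lra | apply lt_1_INR; lia]. }
  pose proof (pos_INR l); pose proof (pos_INR m).
  set (K := INR nf * 2 ^ l * 4 ^ m).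
  assert (HK0 : 0 <= K).
  { unfold K; apply Rmult_le_pos; [apply Rmult_le_pos |]; try apply pow_le; lra. }
  assert (HK : K <= (5/4) ^ b).
  { apply Rle_trans with (exp (INR b * / 5)).
    - unfold K; replace (4 ^ m) with (2 ^ (2 * m)) by (rewrite pow_mult; f_equal; lra).
      rewrite <- (exp_ln (INR nf)) by lra.
      pose proof (pow2_le_exp_INR l); pose proof (pow2_le_exp_INR (2 * m)).
      pose proof (exp_pos (ln (INR nf))); pose proof (pow_le 2 l ltac:(lra)); pose proof (pow_le 2 (2 * m) ltac:(lra)).
      apply Rle_trans with (exp (ln (INR nf)) * exp (INR l) * exp (INR (2 * m))).
      + apply Rmult_le_compat; [nra | lra | apply Rmult_le_compat_l |]; lra.
      + rewrite <- !exp_plus; apply exp_le_compat; rewrite mult_INR; simpl INR; lra.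
    - rewrite exp_INR_mult; apply pow_incr; split; [apply Rlt_le, exp_pos |].
      pose proof (exp_le_inv_one_minus (/ 5) ltac:(lra)) as Hexp.
      replace (/ (1 - / 5)) with (5/4) in Hexp by field; exact Hexp. }
  assert (H2m : 2 ^ m <= (10/9) ^ b).
  { apply Rle_trans with (exp (INR b * / 10)).
    - apply Rle_trans with (exp (INR m)); [apply pow2_le_exp_INR | apply exp_le_compat; lra].
    - rewrite exp_INR_mult; apply pow_incr; split; [apply Rlt_le, exp_pos |].
      pose proof (exp_le_inv_one_minus (/ 10) ltac:(lra)) as Hexp.
      replace (/ (1 - / 10)) with (10/9) in Hexp by field; exact Hexp. }
  assert (K * (3/4) ^ b <= (15/16) ^ 40).
  { apply Rle_trans with ((5/4) ^ b * (3/4) ^ b); [apply Rmult_le_compat_r; [apply pow_le |]; lra |].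
    rewrite <- Rpow_mult_distr; apply Rle_trans with ((5/4 * (3/4)) ^ 40);
      [apply pow_le1_antitone; lra || lia | right; f_equal; lra]. }
  assert (K * (9 * 2 ^ m / 2 ^ b) <= 9 * (3/4) ^ 40).
  { replace (K * (9 * 2 ^ m / 2 ^ b)) with (9 * (K * 2 ^ m * (/ 2) ^ b))
      by (rewrite pow_inv; field; apply pow_nonzero; lra).
    apply Rmult_le_compat_l; [lra |].
    pose proof (pow_le 2 m ltac:(lra)); pose proof (pow_le (/ 2) b ltac:(lra)).
    apply Rle_trans with ((5/4) ^ b * (10/9) ^ b * (/ 2) ^ b);
      [apply Rmult_le_compat_r; [| apply Rmult_le_compat]; lra |].
    rewrite <- !Rpow_mult_distr; apply Rle_trans with ((3/4) ^ b);
      [apply pow_incr; lra | apply pow_le1_antitone; lra || lia]. }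
  assert ((15/16) ^ 40 <= 78/1000) by (simpl; lra).
  assert ((3/4) ^ 40 <= 2/100000) by (simpl; lra).
  rewrite Rmult_plus_distr_l; lra.
Qed.

Lemma fp_b_spec (n m nf l : nat) :
  (40 <= fp_b n m nf l)%nat /\ 5 * (INR l + 2 * INR m + ln (INR nf)) <= INR (fp_b n m nf l).
Proof.
  unfold fp_b; split; [lia |].
  set (y := 5 * (INR l + 2 * INR m + ln (INR nf))).
  set (c := ceilR y).
  assert (y <= IZR c) by (unfold c, ceilR; rewrite opp_IZR; destruct (floorR_spec (- y)); lra).
  assert (IZR c <= INR (Z.to_nat c)).
  { destruct (Z_lt_le_dec c 0) as [Hc | Hc].
    - apply IZR_lt in Hc; pose proof (pos_INR (Z.to_nat c)); lra.
    - rewrite INR_IZR_INZ, Z2Nat.id by auto; lra. }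
  assert (INR (Z.to_nat c) <= INR (Nat.max (Nat.max n nf) (Nat.max (Z.to_nat c) 40)))
    by (apply le_INR; lia).
  lra.
Qed.

Lemma loop_error_budget (nf l m : nat) (E T P : R) :
  (1 <= nf)%nat -> 0 <= E -> 0 <= T <= 2 ^ m * E -> 1 <= P <= 2 ^ m ->
  INR nf * 2 ^ l * 4 ^ m * E <= / 12 ->
  INR nf * (6 * 2 ^ m * E + T) * (1 + 6 * 2 ^ m * E) ^ nf * P <= 2 / 2 ^ l.
Proof.
  intros Hnf HE HT HP Hbudget.
  pose proof (pow2_pos l); pose proof (pow2_pos m).
  assert (Hnf1 : 1 <= INR nf) by (apply (le_INR 1); auto).
  assert (Hl1 : 1 <= 2 ^ l) by (apply pow_R1_Rle; lra).
  assert (H4m : 4 ^ m = 2 ^ m * 2 ^ m) by (rewrite <- Rpow_mult_distr; f_equal; lra).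
  rewrite H4m in Hbudget.
  assert (Hnd : INR nf * (6 * 2 ^ m * E) <= / 2).
  { assert (INR nf * 2 ^ m * E * 1 <= INR nf * 2 ^ m * E * (2 ^ l * 2 ^ m))
      by (apply Rmult_le_compat_l; nra).
    nra. }
  pose proof (pow_one_plus_le_two (6 * 2 ^ m * E) nf ltac:(nra) Hnd) as Hpow.
  assert (INR nf * (6 * 2 ^ m * E + T) <= INR nf * (7 * 2 ^ m * E))
    by (apply Rmult_le_compat_l; lra).
  assert ((1 + 6 * 2 ^ m * E) ^ nf * P <= 2 * 2 ^ m)
    by (apply Rmult_le_compat; try apply pow_le; nra).
  (* the product is at most 14 nf 4^m E <= (14/12) / 2^l *)
  apply Rle_trans with (INR nf * (7 * 2 ^ m * E) * (2 * 2 ^ m)).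
  - rewrite Rmult_assoc; apply Rmult_le_compat; try lra.
    + apply Rmult_le_pos; nra.
    + apply Rmult_le_pos; [apply pow_le |]; nra.
  - apply (Rmult_le_reg_l (2 ^ l)); [lra |].
    replace (2 ^ l * (2 / 2 ^ l)) with 2 by (field; lra).
    nra.
Qed.

Lemma frac_loop_accuracy (b m nf l : nat) (w f : R) :
  (3 <= b)%nat -> (1 <= nf)%nat -> 1 < w <= 2 ^ m -> 0 <= f < 1 -> trunc nf f = f ->
  INR nf * 2 ^ l * 4 ^ m * sqrt_residual_bound b m <= / 12 ->
  Rabs (frac_loop b w f nf - Rpower w f) <= 2 / 2 ^ l.
Proof.
  intros Hb Hnf Hw Hf Htrunc Hbudget.
  set (E := sqrt_residual_bound b m) in *.
  assert (HE : E = (3/4) ^ b + 9 * 2 ^ m * / 2 ^ b) by reflexivity.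
  pose proof (Rinv_0_lt_compat _ (pow2_pos b)); pose proof (pow_le (3/4) b ltac:(lra)).
  assert (Hm : 2 <= 2 ^ m).
  { destruct m; [simpl in Hw; lra |].
    simpl; pose proof (pow_R1_Rle 2 m ltac:(lra)); lra. }
  assert (HE0 : 0 <= E) by nra.
  assert (HmE : 2 ^ m * E <= / 12).
  { apply Rle_trans with (INR nf * 2 ^ l * 4 ^ m * E); auto.
    apply Rmult_le_compat_r; auto.
    assert (1 <= INR nf) by (apply (le_INR 1); auto).
    pose proof (pow_R1_Rle 2 l ltac:(lra)); pose proof (pow_incr 2 4 m ltac:(lra)).
    assert (1 <= INR nf * 2 ^ l) by nra; nra. }
  set (eps := 2 * 2 ^ m * E).
  assert (Heps : 0 <= eps <= / 6) by (unfold eps; nra).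
  pose proof (pow2root_error b m w eps Hw Hm Heps
                (fun z Hz => SQRT_error b m z Hb Hm HmE Hz)) as Hroots.
  pose proof (frac_loop_error b w f (3 * eps) ltac:(lra) Hf ltac:(lra) Hroots nf) as Hloop.
  rewrite Htrunc in Hloop; replace (3 * eps) with (6 * 2 ^ m * E) in Hloop by (unfold eps; ring).
  eapply Rle_trans; [apply Hloop |]; apply loop_error_budget; auto.
  - split; [lra | nra].
  - split; [apply Rpower_ge1; lra |].
    apply Rle_trans with (Rpower w 1); [apply Rle_Rpower; lra | rewrite Rpower_1; lra].
Qed.

Lemma FractionalPower_error (n m nf l : nat) (w f : R) :
  1 < w -> fixed_repr n m w -> 0 <= f <= 1 -> frac_repr nf f ->
  Rabs (FractionalPower w f n m nf l - Rpower w f) <= 2 / 2 ^ l.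
Proof.
  intros Hw Hrep Hf Hfrep.
  assert (Hl : 0 <= 2 / 2 ^ l) by (apply Rdiv_le_0_compat; [lra | apply pow2_pos]).
  unfold FractionalPower; cbv zeta.
  destruct (Req_EM_T f 1) as [-> | Hf1].
  { rewrite Rpower_1, Rminus_diag, Rabs_R0 by lra; auto. }
  destruct (Req_EM_T f 0) as [-> | Hf0].
  { rewrite Rpower_O, Rminus_diag, Rabs_R0 by lra; auto. }
  destruct Hfrep as [| [bits Hbits]]; [contradiction |].
  assert (Hnf : (1 <= nf)%nat) by (destruct nf; [simpl in Hbits; contradiction | lia]).
  destruct (fp_b_spec n m nf l) as [Hb Hbineq].
  apply frac_loop_accuracy with m; try lia; try lra.
  - pose proof (fixed_repr_le n m w Hrep); lra.
  - apply trunc_frac_repr with bits; auto.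
  - apply sqrt_residual_budget; auto.
Qed.

Theorem corollary2 (n m nf l : nat) (w F f : R) :
  1 < w -> fixed_repr n m w ->
  0 <= F <= 1 ->
  0 <= f <= 1 -> frac_repr nf f ->
  Rabs (F - f) <= / 2 ^ nf ->
  Rabs (FractionalPower w f n m nf l - Rpower w F)
    <= powerRZ (1/2) (Z.of_nat l - 1) + w * ln w / 2 ^ nf.
Proof.
  intros Hw Hrep HF Hf Hfrep HFf.
  assert (Hhalf : powerRZ (1/2) (Z.of_nat l - 1) = 2 / 2 ^ l).
  { replace (Z.of_nat l - 1)%Z with (Z.of_nat l + -1)%Z by lia.
    rewrite powerRZ_add, <- pow_powerRZ by lra; simpl.
    rewrite Rdiv_1_l, pow_inv; field; apply pow_nonzero; lra. }
  assert (Hwlnw : 0 <= w * ln w).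
  { assert (0 < ln w) by (rewrite <- ln_1; apply ln_increasing; lra); nra. }
  pose proof (FractionalPower_error n m nf l w f Hw Hrep Hf Hfrep).
  pose proof (Rpower_lipschitz w f F Hw Hf HF).
  assert (w * ln w * Rabs (f - F) <= w * ln w / 2 ^ nf)
    by (rewrite Rabs_minus_sym; apply Rmult_le_compat_l; auto).
  replace (FractionalPower w f n m nf l - Rpower w F)
    with ((FractionalPower w f n m nf l - Rpower w f) + (Rpower w f - Rpower w F)) by ring.
  eapply Rle_trans; [apply Rabs_triang |]; lra.
Qed.
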